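(* There exists $\varepsilon_0>0$ such that for every $\varepsilon\in(0,\varepsilon_0)$ the following holds. Let $\mathbf{U}$ be the $7\times 7$ matrix $$\mathbf{U}=\begin{pmatrix} 0 & -1 & \varepsilon & -10 & -\tfrac13+\varepsilon & -\tfrac13+\varepsilon & -\tfrac13+\varepsilon\\ \varepsilon & 0 & -1 & -10 & -\tfrac13+\varepsilon & -\tfrac13+\varepsilon & -\tfrac13+\varepsilon\\ -1 & \varepsilon & 0 & -10 & -\tfrac13+\varepsilon & -\tfrac13+\varepsilon & -\tfrac13+\varepsilon\\ -2 & -2 & 2 & 0 & -\tfrac13 & -\tfrac13 & -\tfrac13\\ -\tfrac13 & -\tfrac13 & -\tfrac13 & 10 & 0 & -1 & \varepsilon\\ -\tfrac13 & -\tfrac13 & -\tfrac13 & 10 & \varepsilon & 0 & -1\\ -\tfrac13 & -\tfrac13 & -\tfrac13 & 10 & -1 & \varepsilon & 0 \end{pmatrix},$$ and let $(\mathbf{x},\mathbf{y})$ be a Nash equilibrium of the symmetric game with payoff matrix $\mathbf{U}$. If $x_1+x_2+x_3>0$ and $y_1+y_2+y_3>0$, then $x_1=x_2=x_3$ and $y_1=y_2=y_3$. If $x_5+x_6+x_7>0$ and $y_5+y_6+y_7>0$, then $x_5=x_6=x_7$ and $y_5=y_6=y_7$.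
   Context: Mixed strategies are elements of $S_7=\{\mathbf{x}\in\mathbb{R}_+^7:\sum_i x_i=1\}$; for the profile $(\mathbf{x},\mathbf{y})$ the row player gets $\mathbf{x}\cdot\mathbf{U}\mathbf{y}$ and the column player gets $\mathbf{y}\cdot\mathbf{U}\mathbf{x}$. The paper assumes throughout that $\varepsilon>0$ is ''small enough''. *)

From mathcomp Require Import all_boot all_order all_algebra.
Set Implicit Arguments. Unset Strict Implicit. Unset Printing Implicit Defensive.
Import Order.TTheory GRing.Theory Num.Theory.
Local Open Scope ring_scope.

Definition mixed_strategy (R : realFieldType) (n : nat) (x : 'I_n -> R) : Prop :=
  (forall i, 0 <= x i) /\ \sum_(i < n) x i = 1.

Definition payoff (R : realFieldType) (n : nat) (U : 'M[R]_n) (x y : 'I_n -> R) : R :=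
  \sum_(i < n) \sum_(j < n) x i * U i j * y j.

Definition symmetric_nash (R : realFieldType) (n : nat) (U : 'M[R]_n)
  (x y : 'I_n -> R) : Prop :=
  mixed_strategy x /\ mixed_strategy y /\
  (forall x', mixed_strategy x' -> payoff U x' y <= payoff U x y) /\
  (forall y', mixed_strategy y' -> payoff U y' x <= payoff U y x).

(* The 7x7 matrix of the lemma, rows/cols indexed 0..6 (paper's 1..7). *)
Definition Ueps (R : realFieldType) (e : R) : 'M[R]_7 :=
  \matrix_(i < 7, j < 7)
   let t := (-(1/3%:R) + e) in
   let q := -(1/3%:R) in
   match nat_of_ord i, nat_of_ord j with
   | 0, 0 => 0 | 0, 1 => -1 | 0, 2 => e | 0, 3 => -10%:R | 0, _ => t
   | 1, 0 => e | 1, 1 => 0 | 1, 2 => -1 | 1, 3 => -10%:R | 1, _ => t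
   | 2, 0 => -1 | 2, 1 => e | 2, 2 => 0 | 2, 3 => -10%:R | 2, _ => t
   | 3, 0 => -2%:R | 3, 1 => -2%:R | 3, 2 => 2%:R | 3, 3 => 0 | 3, _ => q
   | 4, 3 => 10%:R | 4, 4 => 0 | 4, 5 => -1 | 4, 6 => e | 4, _ => q
   | 5, 3 => 10%:R | 5, 4 => e | 5, 5 => 0 | 5, 6 => -1 | 5, _ => q
   | _, 3 => 10%:R | _, 4 => -1 | _, 5 => e | _, 6 => 0 | _, _ => q
   end.

(* Inside each block of three strategies the rows of U differ only through an
   epsilon-perturbed rock-paper-scissors game, so the restrictions a and b of x
   and y to a block are best replies to each other in that 3x3 game.  If a is
   not constant and a_i is a largest entry, pure strategy i+1 strictly beats
   i+2 against a, whence b_(i+2) = 0; as b is nonzero, strategy i+1 then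
   strictly beats i against b, whence a_i = 0, which is absurd. *)

From mathcomp Require Import all_boot all_order all_algebra.
From mathcomp Require Import ring lra.
Import Order.TTheory GRing.Theory Num.Theory.
Set Implicit Arguments.
Unset Strict Implicit.
Unset Printing Implicit Defensive.

Local Open Scope ring_scope.

Section BestResponse.
Variables (R : realFieldType) (n : nat) (U : 'M[R]_n).

Definition pure_payoff (y : 'I_n -> R) (i : 'I_n) : R := \sum_j U i j * y j.

Lemma payoff_pure x y : payoff U x y = \sum_i x i * pure_payoff y i.
Proof.
apply: eq_bigr => i _; rewrite mulr_sumr; apply: eq_bigr => j _.
by rewrite mulrA.
Qed.

Lemma sum_indicator_mul (k : 'I_n) (F : 'I_n -> R) :
  \sum_l (l == k)%:R * F l = F k.
Proof.
rewrite (bigD1 k) //= eqxx mul1r big1 ?addr0 // => l /negbTE ->.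
by rewrite mul0r.
Qed.

Lemma best_response_support x y :
  mixed_strategy x ->
  (forall x', mixed_strategy x' -> payoff U x' y <= payoff U x y) ->
  forall i k, 0 < x i -> pure_payoff y k <= pure_payoff y i.
Proof.
move=> [x_ge0 x_sum1] x_best i k xi_gt0.
pose x' l := x l + x i * ((l == k)%:R - (l == i)%:R).
have x'_payoff : payoff U x' y =
    payoff U x y + x i * (pure_payoff y k - pure_payoff y i).
  rewrite !payoff_pure /x'.
  under eq_bigr => l _ do rewrite mulrDl -mulrA mulrBl.
  by rewrite big_split /= -mulr_sumr sumrB !sum_indicator_mul.
have x'_mixed : mixed_strategy x'.
  split=> [l|].
    have ind_ge0 b : 0 <= x i * b%:R :> R by rewrite mulr_ge0 ?ler0n.
    rewrite /x' /=; case: (eqVneq l i) => [->|_].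
      by rewrite mulrBr mulr1 addrCA subrr addr0.
    by rewrite subr0 addr_ge0.
  have sum_indicator (l : 'I_n) : \sum_m (m == l)%:R = 1 :> R.
    by rewrite -[RHS](sum_indicator_mul l (fun=> 1)); apply: eq_bigr => m _; rewrite mulr1.
  by rewrite big_split /= -mulr_sumr sumrB !sum_indicator x_sum1 subrr mulr0 addr0.
have := x_best _ x'_mixed; rewrite x'_payoff gerDl.
by rewrite pmulr_rle0 // subr_le0.
Qed.

End BestResponse.

Section PerturbedRPS.
Variables (R : realFieldType) (e : R).
Hypothesis e_gt0 : 0 < e.

Definition rps_payoff (b1 b2 b3 : R) : R := e * b3 - b2.

Definition supported_on_argmax (a1 a2 a3 p1 p2 p3 : R) : Prop :=
  [/\ 0 < a1 -> p2 <= p1 /\ p3 <= p1,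
      0 < a2 -> p3 <= p2 /\ p1 <= p2
    & 0 < a3 -> p1 <= p3 /\ p2 <= p3].

Definition rps_best_reply (a1 a2 a3 b1 b2 b3 : R) : Prop :=
  supported_on_argmax a1 a2 a3
    (rps_payoff b1 b2 b3) (rps_payoff b2 b3 b1) (rps_payoff b3 b1 b2).

Lemma rps_best_reply_rot a1 a2 a3 b1 b2 b3 :
  rps_best_reply a1 a2 a3 b1 b2 b3 -> rps_best_reply a2 a3 a1 b2 b3 b1.
Proof. by case. Qed.

Lemma rps_best_reply_gap a1 a2 a3 b1 b2 b3 :
  0 <= b1 -> 0 <= b2 -> 0 <= b3 -> 0 < b1 + b2 + b3 ->
  rps_best_reply a1 a2 a3 b1 b2 b3 -> rps_best_reply b1 b2 b3 a1 a2 a3 ->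
  rps_payoff a3 a1 a2 < rps_payoff a2 a3 a1 -> a1 <= 0.
Proof.
move=> b1_ge0 b2_ge0 b3_ge0 sb_gt0 [reply_a1 _ _] [_ _ reply_b3] gap.
have b3_eq0 : b3 = 0.
  apply/eqP; rewrite eq_le b3_ge0 andbT leNgt.
  by apply/negP => /reply_b3[_]; rewrite leNgt gap.
rewrite leNgt; apply/negP => /reply_a1[+ _]; rewrite /rps_payoff b3_eq0.
have := mulr_ge0 (ltW e_gt0) b1_ge0; have [b1_gt0|] := ltrP 0 b1; last lra.
by have := mulr_gt0 e_gt0 b1_gt0; lra.
Qed.

Lemma rps_best_reply_max_flat a1 a2 a3 b1 b2 b3 :
  0 <= a2 -> 0 <= a3 -> 0 <= b1 -> 0 <= b2 -> 0 <= b3 -> 0 < b1 + b2 + b3 ->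
  a2 <= a1 -> a3 <= a1 ->
  rps_best_reply a1 a2 a3 b1 b2 b3 -> rps_best_reply b1 b2 b3 a1 a2 a3 ->
  a1 = a2 /\ a1 = a3.
Proof.
move=> a2_ge0 a3_ge0 b1_ge0 b2_ge0 b3_ge0 sb_gt0 le21 le31 reply_ab reply_ba.
have no_gap := rps_best_reply_gap b1_ge0 b2_ge0 b3_ge0 sb_gt0 reply_ab reply_ba.
have e_a12 : 0 <= e * (a1 - a2) by rewrite mulr_ge0 ?subr_ge0 // ltW.
have [lt21|ge21] := ltrP a2 a1.
  have e_a12_gt0 : 0 < e * (a1 - a2) by rewrite mulr_gt0 // subr_gt0.
  have : a1 <= 0 by apply: no_gap; rewrite /rps_payoff; lra.
  lra.
have [lt31|ge31] := ltrP a3 a1; last by split; lra.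
have : a1 <= 0 by apply: no_gap; rewrite /rps_payoff; lra.
lra.
Qed.

Lemma rps_best_reply_flat a1 a2 a3 b1 b2 b3 :
  0 <= a1 -> 0 <= a2 -> 0 <= a3 -> 0 <= b1 -> 0 <= b2 -> 0 <= b3 ->
  0 < b1 + b2 + b3 ->
  rps_best_reply a1 a2 a3 b1 b2 b3 -> rps_best_reply b1 b2 b3 a1 a2 a3 ->
  a1 = a2 /\ a2 = a3.
Proof.
move=> a1_ge0 a2_ge0 a3_ge0 b1_ge0 b2_ge0 b3_ge0 sb_gt0 reply_ab reply_ba.
have sb_rot_gt0 : 0 < b2 + b3 + b1 by lra.
have sb_rot2_gt0 : 0 < b3 + b1 + b2 by lra.
have reply_ab' := rps_best_reply_rot reply_ab; have reply_ba' := rps_best_reply_rot reply_ba.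
have reply_ab'' := rps_best_reply_rot reply_ab'; have reply_ba'' := rps_best_reply_rot reply_ba'.
have [le21|lt12] := lerP a2 a1; last have [le32|lt23] := lerP a3 a2.
- have [le31|lt13] := lerP a3 a1.
    by have [] := rps_best_reply_max_flat a2_ge0 a3_ge0 b1_ge0 b2_ge0 b3_ge0 sb_gt0
      le21 le31 reply_ab reply_ba; lra.
  have [] := rps_best_reply_max_flat a1_ge0 a2_ge0 b3_ge0 b1_ge0 b2_ge0 sb_rot2_gt0
    (ltW lt13) (le_trans le21 (ltW lt13)) reply_ab'' reply_ba''; lra.
- have [] := rps_best_reply_max_flat a3_ge0 a1_ge0 b2_ge0 b3_ge0 b1_ge0 sb_rot_gt0
    le32 (ltW lt12) reply_ab' reply_ba'; lra.
- have [] := rps_best_reply_max_flat a1_ge0 a2_ge0 b3_ge0 b1_ge0 b2_ge0 sb_rot2_gt0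
    (ltW (lt_trans lt12 lt23)) (ltW lt23) reply_ab'' reply_ba''; lra.
Qed.

End PerturbedRPS.

Lemma sum_ord7 (R : realFieldType) (F : 'I_7 -> R) :
  \sum_(j < 7) F j = F (inord 0) + F (inord 1) + F (inord 2) + F (inord 3)
    + F (inord 4) + F (inord 5) + F (inord 6).
Proof.
rewrite (eq_bigr (fun j => F (inord (val j)))) => [|j _]; last by rewrite inord_val.
by rewrite !big_ord_recl big_ord0 /= !addrA addr0.
Qed.

Lemma Ueps_block_payoffs (R : realFieldType) (e : R) (y : 'I_7 -> R) (o : nat) :
  o = 0%N \/ o = 4%N ->
  let b0 := y (inord o) in let b1 := y (inord o.+1) in let b2 := y (inord o.+2) in
  exists c, [/\ pure_payoff (Ueps e) y (inord o) = c + rps_payoff e b0 b1 b2,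
    pure_payoff (Ueps e) y (inord o.+1) = c + rps_payoff e b1 b2 b0
  & pure_payoff (Ueps e) y (inord o.+2) = c + rps_payoff e b2 b0 b1].
Proof.
case=> -> b0 b1 b2; rewrite /pure_payoff /rps_payoff /b0 /b1 /b2 !sum_ord7 !mxE !inordK //=.
- exists (- 10%:R * y (inord 3) + (e - 3%:R^-1) * (y (inord 4) + y (inord 5) + y (inord 6))).
  by split; rewrite ?div1r; ring.
- exists (- 3%:R^-1 * (y (inord 0) + y (inord 1) + y (inord 2)) + 10%:R * y (inord 3)).
  by split; rewrite ?div1r; ring.
Qed.

Lemma Ueps_block_best_reply (R : realFieldType) (e : R) (o : nat) (x y : 'I_7 -> R) :
  o = 0%N \/ o = 4%N -> mixed_strategy x ->
  (forall x', mixed_strategy x' -> payoff (Ueps e) x' y <= payoff (Ueps e) x y) ->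
  rps_best_reply e (x (inord o)) (x (inord o.+1)) (x (inord o.+2))
    (y (inord o)) (y (inord o.+1)) (y (inord o.+2)).
Proof.
move=> o_block x_mixed x_best.
have best := best_response_support x_mixed x_best.
have [c [p0 p1 p2]] := Ueps_block_payoffs e y o_block.
by split=> x_pos; split; rewrite -(lerD2l c) -?p0 -?p1 -?p2; apply: best.
Qed.

Theorem lemma5 (R : realFieldType) :
  exists eps0 : R, 0 < eps0 /\
  forall eps : R, 0 < eps -> eps < eps0 ->
  forall x y : 'I_7 -> R,
    symmetric_nash (Ueps eps) x y ->
    (0 < x (inord 0) + x (inord 1) + x (inord 2) ->
     0 < y (inord 0) + y (inord 1) + y (inord 2) ->
     x (inord 0) = x (inord 1) /\ x (inord 1) = x (inord 2) /\
     y (inord 0) = y (inord 1) /\ y (inord 1) = y (inord 2)) /\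
    (0 < x (inord 4) + x (inord 5) + x (inord 6) ->
     0 < y (inord 4) + y (inord 5) + y (inord 6) ->
     x (inord 4) = x (inord 5) /\ x (inord 5) = x (inord 6) /\
     y (inord 4) = y (inord 5) /\ y (inord 5) = y (inord 6)).
Proof.
exists 1; split=> [|e e_gt0 _ x y [x_mixed [y_mixed [x_best y_best]]]]; first exact: ltr01.
have [x_ge0 _] := x_mixed; have [y_ge0 _] := y_mixed.
have block_flat o : o = 0%N \/ o = 4%N ->
    0 < x (inord o) + x (inord o.+1) + x (inord o.+2) ->
    0 < y (inord o) + y (inord o.+1) + y (inord o.+2) ->
    x (inord o) = x (inord o.+1) /\ x (inord o.+1) = x (inord o.+2) /\
    y (inord o) = y (inord o.+1) /\ y (inord o.+1) = y (inord o.+2).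
  move=> o_block sx_gt0 sy_gt0.
  have reply_xy := Ueps_block_best_reply o_block x_mixed x_best.
  have reply_yx := Ueps_block_best_reply o_block y_mixed y_best.
  have [? ?] := rps_best_reply_flat e_gt0 (x_ge0 _) (x_ge0 _) (x_ge0 _)
    (y_ge0 _) (y_ge0 _) (y_ge0 _) sy_gt0 reply_xy reply_yx.
  have [? ?] := rps_best_reply_flat e_gt0 (y_ge0 _) (y_ge0 _) (y_ge0 _)
    (x_ge0 _) (x_ge0 _) (x_ge0 _) sx_gt0 reply_yx reply_xy.
  by [].
by split; apply: block_flat; [left | right].
Qed.
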